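(* Let $h\in\mathbb N$ and $u,v\in\mathfrak S_n$ with $u<v$, and let $F$ be an $h$-flipclass of paths from $u$ to $v$. Suppose that for all $i\in[h-1]$ and all vertices $(a,i-1),(b,i+1)$ of $TS_F$, the interval $[(a,i-1),(b,i+1)]$ in the poset induced by $TS_F$, if nonempty, is a diamond (i.e. contains exactly two elements besides its endpoints). For $i\in[h-1]$ define $\bar f_i$ on the set $P^{TS_F}_h((u,0),(v,h))$ of paths of length $h$ from $(u,0)$ to $(v,h)$ in $TS_F$ by sending $((a_0,0),\dots,(a_h,h))$ to the path obtained by replacing $(a_i,i)$ with the other middle element of the diamond $[(a_{i-1},i-1),(a_{i+1},i+1)]$. Then $\bar f_i$ is well defined and the map $i_{TS_F}$ is equivariant: $i_{TS_F}(f_i(\Gamma))=\bar f_i(i_{TS_F}(\Gamma))$ for all $\Gamma\in F$ and $i\in[h-1]$.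
   Context: $\mathfrak S_n$ is the symmetric group on $[n]$, $T$ its transpositions, $\ell$ the length w.r.t. simple transpositions. The Bruhat graph $B(\mathfrak S_n)$ has an edge $x\xrightarrow{t}y$ iff $yx^{-1}=t\in T$ and $\ell(x)<\ell(y)$; Bruhat order: $x\le y$ iff there is a directed path from $x$ to $y$. $P_h(u,v)$ is the set of paths $u=x_0\to\cdots\to x_h=v$ of length $h$. Between two fixed vertices there are $0$ or $2$ paths of length $2$, each the flip of the other; the $i$-th flip operator $f_i$ on $P_h(u,v)$ replaces $x_{i-1}\to x_i\to x_{i+1}$ by its flip; orbits of $\langle f_1,\dots,f_{h-1}\rangle$ on $P_h(u,v)$ are the $h$-flipclasses of paths from $u$ to $v$. The time-support graph $TS_F$ has vertices $(a,i)$ ($0\le i\le h$) such that some path $(x_0,\dots,x_h)\in F$ has $x_i=a$, and edges $(a,i)\xrightarrow{t}(b,i+1)$ whenever some path of $F$ contains $x_i=a\xrightarrow{t}b=x_{i+1}$; it is acyclic and induces a partial order on its vertices (reachability). The map $i_{TS_F}:F\to P^{TS_F}_h((u,0),(v,h))$ sends $(x_0,\dots,x_h)$ to $((x_0,0),\dots,(x_h,h))$. *)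

From mathcomp Require Import all_boot all_order all_fingroup.
Set Implicit Arguments. Unset Strict Implicit. Unset Printing Implicit Defensive.

Local Open Scope group_scope.

Section Bruhat.
Variable n : nat.

(* Coxeter length = number of inversions *)
Definition ell (s : 'S_n) : nat :=
  #|[set p : 'I_n * 'I_n | (p.1 < p.2)%N && (s p.2 < s p.1)%N]|.

Definition is_transp (p : 'S_n) : bool :=
  [exists i : 'I_n, exists j : 'I_n, (i != j) && (p == tperm i j)].

(* Bruhat graph edge x -> y : y x^{-1} in T (composition right-to-left,
   i.e. the mathcomp product x^-1 * y) and ell x < ell y *)
Definition bedge (x y : 'S_n) : bool := is_transp (x^-1 * y) && (ell x < ell y)%N.

Definition bruhat_lt (u v : 'S_n) : bool := (u != v) && connect bedge u v.

Variable h : nat.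

Definition pt (G : (h.+1).-tuple 'S_n) (i : nat) : 'S_n := nth 1 G i.

Definition is_bpath (u v : 'S_n) (G : (h.+1).-tuple 'S_n) : bool :=
  [&& pt G 0 == u, pt G h == v &
      [forall i : 'I_h, bedge (pt G i) (pt G i.+1)]].

Definition Pbr (u v : 'S_n) : {set (h.+1).-tuple 'S_n} := [set G | is_bpath u v G].

(* the i-th flip: replace x_i by the middle vertex of the other length-2 path
   from x_{i-1} to x_{i+1} (there are 0 or 2 such paths) *)
Definition flip (i : nat) (G : (h.+1).-tuple 'S_n) : (h.+1).-tuple 'S_n :=
  match [pick z | [&& z != pt G i, bedge (pt G i.-1) z & bedge z (pt G i.+1)]] with
  | Some z => [tuple if val j == i then z else tnth G j | j < h.+1]
  | None => G
  end.

Definition flip_step (A B : (h.+1).-tuple 'S_n) : bool :=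
  [exists i : 'I_h, (0 < val i)%N && (B == flip i A)].

(* the orbit of G0 under <f_1, ..., f_{h-1}> (the f_i are involutions, so the
   group orbit is the set reachable by finite words in the f_i) *)
Definition flipclass_of (G0 : (h.+1).-tuple 'S_n) : {set (h.+1).-tuple 'S_n} :=
  [set G | connect flip_step G0 G].

Definition is_flipclass (u v : 'S_n) (F : {set (h.+1).-tuple 'S_n}) : Prop :=
  exists2 G0, G0 \in Pbr u v & F = flipclass_of G0.

Definition TSV := ('S_n * 'I_h.+1)%type.

Definition ts_vertex (F : {set (h.+1).-tuple 'S_n}) (x : TSV) : bool :=
  [exists G in F, tnth G x.2 == x.1].

Definition ts_edge (F : {set (h.+1).-tuple 'S_n}) (x y : TSV) : bool :=
  [exists G in F, [&& val y.2 == (val x.2).+1, tnth G x.2 == x.1 & tnth G y.2 == y.1]].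

Definition ts_le (F : {set (h.+1).-tuple 'S_n}) (x y : TSV) : bool :=
  connect (ts_edge F) x y.

Definition ts_interval (F : {set (h.+1).-tuple 'S_n}) (x y : TSV) : {set TSV} :=
  [set w | [&& ts_vertex F w, ts_le F x w & ts_le F w y]].

Definition is_diamond (F : {set (h.+1).-tuple 'S_n}) (x y : TSV) : bool :=
  #|ts_interval F x y :\ x :\ y| == 2.

Definition tpt (P : (h.+1).-tuple TSV) (i : nat) : TSV := nth (1, ord0) P i.

Definition is_tspath (F : {set (h.+1).-tuple 'S_n}) (u v : 'S_n)
    (P : (h.+1).-tuple TSV) : bool :=
  [&& tpt P 0 == (u, ord0), tpt P h == (v, ord_max) &
      [forall i : 'I_h, ts_edge F (tpt P i) (tpt P i.+1)]].

Definition TSpaths (F : {set (h.+1).-tuple 'S_n}) (u v : 'S_n) :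
  {set (h.+1).-tuple TSV} := [set P | is_tspath F u v P].

Definition ts_mid (F : {set (h.+1).-tuple 'S_n}) (x y : TSV) : {set TSV} :=
  ts_interval F x y :\ x :\ y.

Definition barflip (F : {set (h.+1).-tuple 'S_n}) (i : nat)
    (P : (h.+1).-tuple TSV) : (h.+1).-tuple TSV :=
  match [pick c in ts_mid F (tpt P i.-1) (tpt P i.+1) :\ tpt P i] with
  | Some c => [tuple if val j == i then c else tnth P j | j < h.+1]
  | None => P
  end.

Definition iTS (G : (h.+1).-tuple 'S_n) : (h.+1).-tuple TSV :=
  [tuple (tnth G j, j) | j < h.+1].

End Bruhat.

From mathcomp Require Import all_boot all_order all_fingroup.
From mathcomp Require Import zify.
Set Implicit Arguments. Unset Strict Implicit. Unset Printing Implicit Defensive.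

(* An edge (a,i) -> (b,i+1) of TS_F is an edge x_i -> x_{i+1} of a path of F, hence a Bruhat
   edge, and as TS_F is graded by time, the middle elements of an interval [(a,i-1),(b,i+1)]
   are the vertices (c,i) joined by edges to both ends.  The i-th vertex of a path of TS_F is
   such a middle element, so the diamond hypothesis leaves exactly one other one, and putting
   it in place of the i-th vertex gives again a path: \bar f_i is well defined.  For a path
   x of F, that other middle element (c,i) gives a second Bruhat path x_{i-1} -> c -> x_{i+1},
   so f_i really flips x; since f_i x lies in F, its i-th vertex is a middle element distinct
   from (x_i,i), hence the one chosen by \bar f_i. *)

Section ReplaceNth.
Variables (T : Type) (m : nat).

Definition replace_nth (t : m.-tuple T) (i : nat) (z : T) : m.-tuple T :=
  [tuple if val j == i then z else tnth t j | j < m].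

Lemma nth_replace_nth d (t : m.-tuple T) i z k : k < m ->
  nth d (replace_nth t i z) k = if k == i then z else nth d t k.
Proof. by move=> km; rewrite -(tnth_nth d _ (Ordinal km)) tnth_mktuple /= (tnth_nth d). Qed.

End ReplaceNth.

Lemma replace_nth_path (T : Type) (e : rel T) d m (t : m.+1.-tuple T) i z :
  0 < i < m -> (forall j : 'I_m, e (nth d t j) (nth d t j.+1)) ->
  e (nth d t i.-1) z -> e z (nth d t i.+1) ->
  forall j : 'I_m, e (nth d (replace_nth t i z) j) (nth d (replace_nth t i z) j.+1).
Proof.
move=> /andP [i_gt0 _] t_path e_prev e_next j.
rewrite !nth_replace_nth ?ltnS ?(ltnW (ltn_ord j)) ?ltn_ord //.
have [ji|_] := eqVneq (val j) i; first by subst i; rewrite (gtn_eqF (ltnSn j)).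
have [j1_eq|_] := eqVneq j.+1 i; last exact: t_path.
by rewrite -j1_eq in e_prev.
Qed.

Section Flips.
Variables n h : nat.
Implicit Type G : (h.+1).-tuple 'S_n.

Lemma flip_Pbr u v i G : 0 < i < h -> G \in Pbr h u v -> flip i G \in Pbr h u v.
Proof.
move=> /andP [i_gt0 i_lt_h]; rewrite /flip; case: pickP => [z /and3P [_ b_prev b_next]|_] //.
rewrite -/(replace_nth G i z) !inE /is_bpath /pt !nth_replace_nth //.
rewrite (ltn_eqF i_gt0) (gtn_eqF i_lt_h) => /and3P [-> -> /forallP G_path] /=.
by apply/forallP; apply: replace_nth_path; rewrite ?i_gt0.
Qed.

Lemma flipclass_sub_Pbr u v G0 : G0 \in Pbr h u v -> {subset flipclass_of G0 <= Pbr h u v}.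
Proof.
move=> G0P G; rewrite inE => /connectP [p p_path ->] {G}.
elim: p G0 G0P p_path => //= G1 p IH G0 G0P /andP [/existsP [i /andP [i_gt0 /eqP ->]] p_path].
by apply: IH p_path; apply: flip_Pbr G0P; rewrite i_gt0 ltn_ord.
Qed.

Lemma flipclass_flip G0 i G : 0 < i < h -> G \in flipclass_of G0 -> flip i G \in flipclass_of G0.
Proof.
move=> /andP [i_gt0 i_lt_h]; rewrite !inE => G0G; apply: connect_trans G0G (connect1 _).
by apply/existsP; exists (Ordinal i_lt_h); rewrite /= i_gt0 eqxx.
Qed.

End Flips.

Section TimeSupportGraph.
Variables n h : nat.
Variable F : {set (h.+1).-tuple 'S_n}.
Implicit Types (G : (h.+1).-tuple 'S_n) (P : (h.+1).-tuple (TSV n h)) (x y c : TSV n h).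

Lemma ts_edge_time x y : ts_edge F x y -> val y.2 = (val x.2).+1.
Proof. by case/existsP=> G /andP [_ /and3P [/eqP -> _ _]]. Qed.

Lemma ts_edge_neq x y : ts_edge F x y -> x != y.
Proof. by move=> /ts_edge_time xy; apply/eqP=> x_eq_y; rewrite x_eq_y in xy; lia. Qed.

Lemma ts_edge_vertexl x y : ts_edge F x y -> ts_vertex F x.
Proof. by case/existsP=> G /andP [GF /and3P [_ Gx _]]; apply/existsP; exists G; rewrite GF. Qed.

Lemma ts_edge_vertexr x y : ts_edge F x y -> ts_vertex F y.
Proof. by case/existsP=> G /andP [GF /and3P [_ _ Gy]]; apply/existsP; exists G; rewrite GF. Qed.

Lemma ts_path_time x p : path (ts_edge F) x p -> val (last x p).2 = val x.2 + size p.
Proof.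
elim: p x => [|y p IH] x /=; first by rewrite addn0.
by case/andP=> /ts_edge_time xy /IH ->; rewrite xy addnS addSn.
Qed.

Lemma ts_le_time x y : ts_le F x y ->
  exists2 k, val y.2 = val x.2 + k & (k = 0 -> x = y) /\ (k = 1 -> ts_edge F x y).
Proof.
case/connectP=> p xp ->; exists (size p); first exact: ts_path_time.
by split; case: p xp => [|z [|]] //= /andP [].
Qed.

Lemma ts_mid_edges x y c : val y.2 = (val x.2).+2 -> c \in ts_mid F x y ->
  [/\ ts_edge F x c, ts_edge F c y & val c.2 = (val x.2).+1].
Proof.
move=> xy /setD1P [c_ne_y /setD1P [c_ne_x]]; rewrite inE => /and3P [_ xc cy].
have [k1 t1 [k1_0 k1_1]] := ts_le_time xc.
have [k2 t2 [k2_0 k2_1]] := ts_le_time cy.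
have k1_ne0 : k1 != 0 by apply: contra_neq c_ne_x => /k1_0 ->.
have k2_ne0 : k2 != 0 by apply: contra_neq c_ne_y => /k2_0.
have [k1E k2E] : k1 = 1 /\ k2 = 1 by move: xy; rewrite t2 t1; lia.
by split; [exact: k1_1 | exact: k2_1 | rewrite t1 k1E addn1].
Qed.

Variables u v : 'S_n.

Lemma tspath_time P k : P \in TSpaths F u v -> k < h.+1 -> val (tpt P k).2 = k.
Proof.
rewrite inE => /and3P [/eqP P0 _ /forallP P_path].
elim: k => [|k IH] k_lt; first by rewrite P0.
by rewrite (ts_edge_time (P_path (Ordinal (k_lt : k < h)))) IH // ltnW.
Qed.

Lemma tpt_inord P k : P \in TSpaths F u v -> k < h.+1 -> tpt P k = ((tpt P k).1, inord k).
Proof.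
move=> PP k_lt; rewrite [LHS]surjective_pairing; congr pair.
by apply: val_inj; rewrite /= inordK // tspath_time.
Qed.

Lemma tpt_replace_nth P i c k : k < h.+1 ->
  tpt (replace_nth P i c) k = if k == i then c else tpt P k.
Proof. exact: nth_replace_nth. Qed.

Lemma tspath_edge P k : P \in TSpaths F u v -> k < h -> ts_edge F (tpt P k) (tpt P k.+1).
Proof. by move=> + k_lt; rewrite inE => /and3P [_ _ /forallP /(_ (Ordinal k_lt))]. Qed.

Lemma tspath_edge_pred P i : P \in TSpaths F u v -> 0 < i -> i <= h ->
  ts_edge F (tpt P i.-1) (tpt P i).
Proof. by move=> PP i_gt0 i_le_h; rewrite -{2}(prednK i_gt0) tspath_edge // prednK. Qed.

Lemma tspath_mid P i : P \in TSpaths F u v -> 0 < i < h ->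
  tpt P i \in ts_mid F (tpt P i.-1) (tpt P i.+1).
Proof.
move=> PP /andP [i_gt0 i_lt_h].
have e_prev := tspath_edge_pred PP i_gt0 (ltnW i_lt_h).
have e_next := tspath_edge PP i_lt_h.
rewrite !inE (ts_edge_neq e_next) eq_sym (ts_edge_neq e_prev) (ts_edge_vertexr e_prev).
by rewrite /ts_le !connect1.
Qed.

Lemma tpt_iTS G k : k < h.+1 -> tpt (iTS G) k = (pt G k, inord k).
Proof.
move=> k_lt; rewrite /tpt -(tnth_nth _ _ (Ordinal k_lt)) tnth_mktuple /pt (tnth_nth 1%g).
by congr pair; apply: val_inj; rewrite /= inordK.
Qed.

Lemma iTS_replace_nth G i z :
  iTS (replace_nth G i z) = replace_nth (iTS G) i (z, inord i).
Proof.
apply: eq_from_tnth => j; rewrite !tnth_mktuple.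
by have [ji|//] := eqVneq (val j) i; rewrite -ji inord_val.
Qed.

Lemma iTS_tspath G : G \in F -> G \in Pbr h u v -> iTS G \in TSpaths F u v.
Proof.
move=> GF; rewrite !inE /is_tspath => /and3P [/eqP G0 /eqP Gh _].
rewrite !tpt_iTS // G0 Gh (inord_val ord0) (inord_val ord_max) !eqxx /=.
apply/forallP=> j; have j_lt : j < h.+1 := ltnW (ltn_ord j).
have j1_lt : j.+1 < h.+1 := ltn_ord j.
rewrite !tpt_iTS //; apply/existsP; exists G.
by rewrite GF /= /pt !(tnth_nth 1%g) !inordK ?eqxx.
Qed.

Lemma barflip_replace_nth P i c :
  ts_mid F (tpt P i.-1) (tpt P i.+1) :\ tpt P i = [set c] -> barflip F i P = replace_nth P i c.
Proof. by move=> E; rewrite /barflip E; case: pickP => [c' /set1P -> | /(_ c)]; rewrite ?set11. Qed.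

Section Diamonds.

Hypothesis ts_diamonds : forall (i : 'I_h) (a b : 'S_n), (0 < val i)%N ->
  ts_vertex F (a, inord i.-1) -> ts_vertex F (b, inord i.+1) ->
  ts_interval F (a, inord i.-1) (b, inord i.+1) != set0 ->
  is_diamond F (a, inord i.-1) (b, inord i.+1).

Lemma tspath_diamond P i : P \in TSpaths F u v -> 0 < i < h ->
  is_diamond F (tpt P i.-1) (tpt P i.+1).
Proof.
move=> PP hi; have /andP [i_gt0 i_lt_h] := hi.
have prev_lt : i.-1 < h.+1 by lia.
have next_lt : i.+1 < h.+1 by lia.
have e_prev := tspath_edge_pred PP i_gt0 (ltnW i_lt_h).
have e_next := tspath_edge PP i_lt_h.
have /setD1P [_ /setD1P [_ i_mem]] := tspath_mid PP hi.
move: e_prev e_next i_mem.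
rewrite (tpt_inord PP prev_lt) (tpt_inord PP next_lt) => e_prev e_next i_mem.
apply: (ts_diamonds (i := Ordinal i_lt_h) i_gt0).
- exact: ts_edge_vertexl e_prev.
- exact: ts_edge_vertexr e_next.
- by apply/set0Pn; exists (tpt P i).
Qed.

Lemma tspath_other_mid P i : P \in TSpaths F u v -> 0 < i < h ->
  #|ts_mid F (tpt P i.-1) (tpt P i.+1) :\ tpt P i| = 1.
Proof.
move=> PP hi; have := cardsD1 (tpt P i) (ts_mid F (tpt P i.-1) (tpt P i.+1)).
by rewrite tspath_mid // {1}/ts_mid (eqP (tspath_diamond PP hi)) add1n => -[].
Qed.

Lemma barflip_tspath P i : P \in TSpaths F u v -> 0 < i < h -> barflip F i P \in TSpaths F u v.
Proof.
move=> PP hi; have /andP [i_gt0 i_lt_h] := hi.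
have /eqP/cards1P [c Ec] := tspath_other_mid PP hi.
have /setD1P [_ c_mid] : c \in ts_mid F (tpt P i.-1) (tpt P i.+1) :\ tpt P i by rewrite Ec set11.
have gap : val (tpt P i.+1).2 = (val (tpt P i.-1).2).+2 by rewrite !tspath_time //; lia.
have [e_prev e_next _] := ts_mid_edges gap c_mid.
rewrite inE in PP; case/and3P: PP => P0 Ph /forallP P_path.
rewrite (barflip_replace_nth Ec) inE /is_tspath !tpt_replace_nth //.
rewrite (ltn_eqF i_gt0) (gtn_eqF i_lt_h) P0 Ph /=; apply/forallP.
exact: replace_nth_path.
Qed.

Section Equivariance.

Hypothesis F_sub_Pbr : {subset F <= Pbr h u v}.
Hypothesis F_flip_closed : forall i G, 0 < i < h -> G \in F -> flip i G \in F.

Lemma ts_edge_bedge x y : ts_edge F x y -> val x.2 < h -> bedge x.1 y.1.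
Proof.
case/existsP=> G /andP [GF /and3P [/eqP xy /eqP <- /eqP <-]] x_lt.
have := F_sub_Pbr GF; rewrite inE => /and3P [_ _ /forallP /(_ (Ordinal x_lt))].
by rewrite /pt !(tnth_nth 1%g) /= xy.
Qed.

Lemma F_iTS_tspath G : G \in F -> iTS G \in TSpaths F u v.
Proof. by move=> GF; apply: iTS_tspath GF (F_sub_Pbr GF). Qed.

Lemma ts_other_mid_flippable i G c : 0 < i < h -> G \in F ->
    c \in ts_mid F (tpt (iTS G) i.-1) (tpt (iTS G) i.+1) :\ tpt (iTS G) i ->
  [&& c.1 != pt G i, bedge (pt G i.-1) c.1 & bedge c.1 (pt G i.+1)].
Proof.
move=> /andP [i_gt0 i_lt_h] GF /setD1P [c_ne c_mid].
have [prev_lt i_lt next_lt] : [/\ i.-1 < h.+1, i < h.+1 & i.+1 < h.+1] by split; lia.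
have gap : val (tpt (iTS G) i.+1).2 = (val (tpt (iTS G) i.-1).2).+2.
  by rewrite !(tspath_time (F_iTS_tspath GF)) //; lia.
have [e_prev e_next c_time] := ts_mid_edges gap c_mid.
rewrite !tpt_iTS // in e_prev e_next c_ne c_time.
have c_eq : c = (c.1, inord i).
  by rewrite [LHS]surjective_pairing; congr pair; apply: val_inj; rewrite c_time /= !inordK //; lia.
apply/and3P; split.
- by apply: contra_neq c_ne => c1E; rewrite c_eq c1E.
- by apply: (ts_edge_bedge e_prev); rewrite /= inordK //; lia.
- by apply: (ts_edge_bedge e_next); rewrite c_time /= inordK //; lia.
Qed.

Lemma iTS_flip i G : 0 < i < h -> G \in F -> iTS (flip i G) = barflip F i (iTS G).
Proof.
move=> hi GF; have /andP [i_gt0 i_lt_h] := hi.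
have [prev_lt i_lt next_lt] : [/\ i.-1 < h.+1, i < h.+1 & i.+1 < h.+1] by split; lia.
have [/negbTE prev_ne /negbTE next_ne] : i.-1 != i /\ i.+1 != i by split; lia.
have /eqP/cards1P [c Ec] := tspath_other_mid (F_iTS_tspath GF) hi.
have c_other : c \in ts_mid F (tpt (iTS G) i.-1) (tpt (iTS G) i.+1) :\ tpt (iTS G) i.
  by rewrite Ec set11.
rewrite (barflip_replace_nth Ec).
have := F_flip_closed hi GF; rewrite /flip; case: pickP => [z /and3P [z_ne _ _] flipF | no_z _].
  rewrite -/(replace_nth G i z) in flipF *.
  rewrite iTS_replace_nth; congr replace_nth; apply/set1P; rewrite -Ec.
  have := tspath_mid (F_iTS_tspath flipF) hi.
  rewrite iTS_replace_nth !tpt_replace_nth // eqxx prev_ne next_ne.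
  move=> z_mid; rewrite in_setD1 z_mid andbT tpt_iTS //.
  by apply: contra_neq z_ne => -[].
by have := no_z c.1; rewrite (ts_other_mid_flippable hi GF c_other).
Qed.

End Equivariance.

End Diamonds.

End TimeSupportGraph.

Theorem lemma5p6 (n h : nat) (u v : 'S_n) (F : {set (h.+1).-tuple 'S_n}) :
  bruhat_lt u v ->
  is_flipclass u v F ->
  (forall (i : 'I_h) (a b : 'S_n), (0 < val i)%N ->
     ts_vertex F (a, inord i.-1) -> ts_vertex F (b, inord i.+1) ->
     ts_interval F (a, inord i.-1) (b, inord i.+1) != set0 ->
     is_diamond F (a, inord i.-1) (b, inord i.+1)) ->
  (* \bar f_i is well defined *)
  (forall (i : 'I_h) (P : (h.+1).-tuple (TSV n h)), (0 < val i)%N ->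
     P \in TSpaths F u v ->
     [/\ tpt P i \in ts_mid F (tpt P i.-1) (tpt P i.+1),
         #|ts_mid F (tpt P i.-1) (tpt P i.+1) :\ tpt P i| = 1%N &
         barflip F i P \in TSpaths F u v])
  /\
  (* i_{TS_F} is equivariant *)
  (forall (i : 'I_h) (G : (h.+1).-tuple 'S_n), (0 < val i)%N -> G \in F ->
     iTS (flip i G) = barflip F i (iTS G)).
Proof.
move=> _ [G0 G0P ->] diamonds.
have i_bounds (i : 'I_h) : 0 < i -> 0 < i < h by move=> i_gt0; rewrite i_gt0 ltn_ord.
split=> [i P /i_bounds hi PP | i G /i_bounds hi GF].
  split; [exact (tspath_mid PP hi) | exact (tspath_other_mid diamonds PP hi) |
          exact (barflip_tspath diamonds PP hi)].
exact (iTS_flip diamonds (flipclass_sub_Pbr G0P) (@flipclass_flip n h G0) hi GF).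
Qed.
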